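(* Let $d\ge1$, let $b:\mathbb{R}^d\to\mathbb{R}$ be continuous and bounded, and let $R>0$ be such that (1) $b$ is not constant on $\{x\in\mathbb{R}^d:|x|\le R\}$, and (2) for every $x\in\mathbb{R}^d$ with $|x|>R$ there is $z\in\mathbb{R}^d$ with $|z|\le R$ such that $b(x+y)=b(z+y)$ for all $y\in\mathbb{R}^d$. Then there is $M>0$ such that \[ \inf_{x\in\mathbb{R}^d}\int_{|y|\le M}\int_{|\overline y|\le M}|b(x+y)-b(x+\overline y)|^2\,\mathrm{d}y\,\mathrm{d}\overline y>0. \]
   Context: $|x|$ denotes the Euclidean norm on $\mathbb{R}^d$; integrals are with respect to Lebesgue measure on $\mathbb{R}^d$. *)

From HB Require Import structures.
From mathcomp Require Import all_boot all_order all_algebra.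
From mathcomp Require Import all_classical all_reals all_analysis.
Set Implicit Arguments. Unset Strict Implicit. Unset Printing Implicit Defensive.
Import Order.TTheory GRing.Theory Num.Theory.
Import numFieldNormedType.Exports.
Local Open Scope ring_scope.

Definition enorm (R : realType) (d : nat) (x : 'rV[R]_d) : R :=
  Num.sqrt (\sum_(i < d) x ord0 i ^+ 2).

(* Integral of an extended-real function over R^d w.r.t. Lebesgue measure,
   computed as the iterated one-dimensional Lebesgue integral
   (for nonnegative measurable integrands this coincides, by Tonelli,
   with the integral w.r.t. d-dimensional Lebesgue measure). *)
Fixpoint lebint (R : realType) (d : nat) : ('rV[R]_d -> \bar R) -> \bar R :=
  match d with
  | 0 => fun f => f 0
  | d'.+1 => fun f =>
      (\int[@lebesgue_measure R]_(t in [set: R])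
         lebint (fun v : 'rV[R]_d' => f (row_mx (\row_(j < 1) t) v)))%E
  end.

Definition Jint (R : realType) (d : nat) (b : 'rV[R]_d -> R) (M : R)
    (x : 'rV[R]_d) : \bar R :=
  lebint (fun y : 'rV[R]_d =>
    lebint (fun y' : 'rV[R]_d =>
      if (enorm y <= M) && (enorm y' <= M)
      then ((`|b (x + y) - b (x + y')| ^+ 2)%:E)%E
      else 0%E)).

From HB Require Import structures.
From mathcomp Require Import all_boot all_order all_algebra.
From mathcomp Require Import all_classical all_reals all_analysis.
From mathcomp Require Import lra ring.
Import Order.TTheory GRing.Theory Num.Theory.
Import numFieldNormedType.Exports.
Local Open Scope classical_set_scope.
Local Open Scope ring_scope.

(** Pick x1, x2 with |x1|, |x2| <= R and b x1 <> b x2.  By continuity,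
    |b(x+y) - b(x+y')| >= |b x1 - b x2| / 2 as soon as x + y and x + y' lie in
    small cubes (of side at most 2) around x1 and x2.  For |x| <= R the
    coordinates of the translated cubes around x1 - x and x2 - x are bounded
    by 2R + 1, so they lie in the ball of radius M = d (2R + 1) and J_M(x) is at
    least a fixed multiple of the product of their volumes.  For |x| > R,
    hypothesis (2) gives |z| <= R with J_M(x) = J_M(z). *)

Lemma ler_half_dist_near (R : realFieldType) (a c p q : R) :
  `|p - a| < `|a - c| / 4 -> `|q - c| < `|a - c| / 4 ->
  `|a - c| / 2 <= `|p - q|.
Proof.
have [h|h] := lerP 0 (a - c); [rewrite (ger0_norm h) | rewrite (ltr0_norm h)];
rewrite !ltr_norml => /andP[? ?] /andP[? ?];
(have [h'|h'] := lerP 0 (p - q); [rewrite (ger0_norm h') | rewrite (ltr0_norm h')]);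
lra.
Qed.

Section JintLowerBound.
Variable R : realType.
Set Implicit Arguments.
Unset Strict Implicit.

Definition cube (d : nat) (c : 'rV[R]_d) (s : R) : set 'rV[R]_d :=
  [set v | forall i, `|v ord0 i - c ord0 i| < s].

Lemma cube_addl (d : nat) (c x y : 'rV[R]_d) (s : R) :
  cube (c - x) s y -> cube c s (x + y).
Proof.
move=> hy i; have := hy i; rewrite !mxE.
by rewrite (_ : y ord0 i - _ = x ord0 i + y ord0 i - c ord0 i) //; ring.
Qed.

Lemma cube_le (d : nat) (c v : 'rV[R]_d) (s r : R) :
  s <= r -> cube c s v -> cube c r v.
Proof. by move=> sr hv i; exact: lt_le_trans (hv i) sr. Qed.

(* No measurability is needed: the integral of a nonnegative function is a
   supremum over the simple functions below it. *)
Lemma ge0_le_integralT (f g : R -> \bar R) :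
  (forall x, (0 <= g x)%E) -> (forall x, (g x <= f x)%E) ->
  (\int[@lebesgue_measure R]_(x in [set: R]) g x <=
   \int[@lebesgue_measure R]_(x in [set: R]) f x)%E.
Proof.
move=> g0 gf.
have f0 x : (0 <= f x)%E by exact: le_trans (g0 x) (gf x).
rewrite !ge0_integralTE //.
apply: ge_ereal_sup => _ [h hg <-]; apply: ereal_sup_ubound.
by exists h => // x; exact: le_trans (hg x) (gf x).
Qed.

Lemma integralT_ge_itv (f : R -> \bar R) (c s K : R) :
  0 < s -> 0 <= K -> (forall x, (0 <= f x)%E) ->
  (forall t, `|t - c| < s -> (K%:E <= f t)%E) ->
  ((K * (2 * s))%:E <= \int[@lebesgue_measure R]_(x in [set: R]) f x)%E.
Proof.
move=> s0 K0 f0 fK.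
pose A := `](c - s), (c + s)[%classic.
have mA : measurable A by exact: measurable_itv.
apply: le_trans (@ge0_le_integralT f (fun x => (K * \1_A x)%:E) _ _).
- have := @integralZl_indic _ _ _ (@lebesgue_measure R) _ measurableT (fun=> A) K _ mA.
  rewrite /= => ->; last by move=> Kn; have := lt_le_trans Kn K0; rewrite ltxx.
  rewrite integral_indic // setIT [X in (_ * X)%E](_ : _ = (c + s - (c - s))%:E).
    by rewrite -EFinM (_ : c + s - (c - s) = 2 * s) //; ring.
  have := lebesgue_measure_itv `](c - s), (c + s)[.
  by rewrite /= lte_fin ifT => [lenA|]; [exact: lenA | lra].
- by move=> x; rewrite lee_fin mulr_ge0.
- move=> x; rewrite indicE; have [xA|] := boolP (x \in A); last by rewrite mulr0.
  rewrite mulr1; apply: fK; move: xA; rewrite inE /A /= in_itv /= => /andP[h1 h2].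
  by rewrite ltr_norml; apply/andP; split; lra.
Qed.

Lemma lebint_ge_cube (d : nat) (c : 'rV[R]_d) (s k : R)
    (f : 'rV[R]_d -> \bar R) :
  0 < s -> 0 <= k -> (forall v, (0 <= f v)%E) ->
  (forall v, cube c s v -> (k%:E <= f v)%E) ->
  ((k * (2 * s) ^+ d)%:E <= lebint f)%E.
Proof.
elim: d c s k f => [|d IH] c s k f s0 k0 f0 fk /=.
  by rewrite expr0 mulr1; apply: fk => -[].
rewrite exprSr mulrA; apply: (integralT_ge_itv (c := c ord0 ord0)) => //.
- by rewrite mulr_ge0 // exprn_ge0 // mulr_ge0 // ltW.
- move=> t; have := IH 0 1 0 (fun v => f (row_mx (\row_(j < 1) t) v)) ltr01
    (le_refl _) (fun v => f0 _) (fun v _ => f0 _).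
  by rewrite mul0r.
move=> t ht; apply: (IH (\row_(j < d) c ord0 (rshift 1 j))) => // v hv.
apply: fk => i; rewrite mxE; case: splitP => j Hj.
  by rewrite mxE; have -> : i = ord0 by apply/val_inj; rewrite /= Hj (ord1 j).
have -> : i = rshift 1 j by apply/val_inj.
by have := hv j; rewrite mxE.
Qed.

Lemma lebint_ge0 (d : nat) (f : 'rV[R]_d -> \bar R) :
  (forall v, (0 <= f v)%E) -> (0 <= lebint f)%E.
Proof.
move=> f0; have := lebint_ge_cube (c := 0) ltr01 (le_refl 0) f0 (fun v _ => f0 v).
by rewrite mul0r.
Qed.

Lemma Jint_ge_cubes (d : nat) (b : 'rV[R]_d -> R) (M : R)
    (x c1 c2 : 'rV[R]_d) (s K : R) :
  0 < s -> 0 <= K ->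
  (forall y y', cube c1 s y -> cube c2 s y' ->
     [/\ enorm y <= M, enorm y' <= M & K <= `|b (x + y) - b (x + y')| ^+ 2]) ->
  ((K * (2 * s) ^+ d * (2 * s) ^+ d)%:E <= Jint b M x)%E.
Proof.
move=> s0 K0 hK.
have integrand_ge0 y y' : (0 <= if (enorm y <= M)%R && (enorm y' <= M)%R
    then (`|b (x + y) - b (x + y')| ^+ 2)%:E else 0)%E.
  by case: ifP => _ //; rewrite lee_fin sqr_ge0.
apply: (lebint_ge_cube (c := c1)) => //.
- by rewrite mulr_ge0 ?exprn_ge0 ?mulr_ge0 // ltW.
- by move=> y; exact: lebint_ge0.
move=> y hy; apply: (lebint_ge_cube (c := c2)) => // y' hy'.
by have [-> -> ?] := hK y y' hy hy'.
Qed.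

Lemma Jint_shift (d : nat) (b : 'rV[R]_d -> R) (M : R)
    (x z : 'rV[R]_d) :
  (forall y, b (x + y) = b (z + y)) -> Jint b M x = Jint b M z.
Proof.
move=> bxz; rewrite /Jint; congr lebint; apply: funext => y; congr lebint.
by apply: funext => y'; rewrite !bxz.
Qed.

Lemma enorm_coord_le (d : nat) (v : 'rV[R]_d) i :
  `|v ord0 i| <= enorm v.
Proof.
rewrite /enorm -sqrtr_sqr ler_sqrt; last by rewrite sumr_ge0 // => j _; exact: sqr_ge0.
by rewrite (bigD1 i) //= lerDl sumr_ge0 // => j _; exact: sqr_ge0.
Qed.

Lemma enorm_le_coord (d : nat) (v : 'rV[R]_d) (B : R) :
  0 <= B -> (forall i, `|v ord0 i| <= B) -> enorm v <= d%:R * B.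
Proof.
move=> B0 hB; rewrite /enorm -(ger0_norm (mulr_ge0 (ler0n _ d) B0)) -sqrtr_sqr.
rewrite ler_sqrt; last exact: sqr_ge0.
apply: (@le_trans _ _ (\sum_(i < d) B ^+ 2)).
  apply: ler_sum => i _; rewrite -real_normK ?num_real //.
  by rewrite ler_sqr ?nnegrE // hB.
rewrite sumr_const card_ord exprMn -[B ^+ 2 *+ d]mulr_natr mulrC ler_wpM2r ?sqr_ge0 //.
by rewrite -natrX ler_nat; case: d {v hB} => // n; rewrite expnS leq_pmulr.
Qed.

Lemma enorm_le_cube (d : nat) (c y : 'rV[R]_d) (s B : R) :
  0 <= s -> 0 <= B -> (forall i, `|c ord0 i| <= B) -> cube c s y ->
  enorm y <= d%:R * (B + s).
Proof.
move=> s0 B0 hc hy; apply: enorm_le_coord => [|i]; first exact: addr_ge0.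
have := hy i; have := hc i.
rewrite ltr_norml !ler_norml => /andP[? ?] /andP[? ?]; apply/andP; split; lra.
Qed.

Lemma continuous_cube (d : nat) (b : 'rV[R]_d -> R)
    (x0 : 'rV[R]_d) (e : R) :
  continuous b -> 0 < e ->
  exists2 r, 0 < r & forall u, cube x0 r u -> `|b u - b x0| < e.
Proof.
move=> hb e0; have /cvgrPdist_lt/(_ e e0)/nbhs_ballP[r r0 H] := hb x0.
exists r => // u hu; rewrite distrC; apply: H; split => // i j.
by rewrite (ord1 i) /ball /= distrC; exact: hu.
Qed.

Lemma Jint_bounded_below_on_ball (d : nat) (b : 'rV[R]_d -> R) (Rad : R)
    (x1 x2 : 'rV[R]_d) :
  continuous b -> enorm x1 <= Rad -> enorm x2 <= Rad -> b x1 != b x2 ->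
  exists2 L, 0 < L &
    forall x, enorm x <= Rad -> (L%:E <= Jint b (d%:R * (2 * Rad + 1)) x)%E.
Proof.
move=> hb n1 n2 neq; set delta := `|b x1 - b x2|.
have delta0 : 0 < delta by rewrite normr_gt0 subr_eq0.
have [r1 r1_gt0 near_x1] := continuous_cube x1 hb (divr_gt0 delta0 (ltr0n _ 4)).
have [r2 r2_gt0 near_x2] := continuous_cube x2 hb (divr_gt0 delta0 (ltr0n _ 4)).
pose s := Num.min r1 (Num.min r2 1).
have s0 : 0 < s by rewrite !lt_min r1_gt0 r2_gt0 ltr01.
have [sr1 sr2 s1] : [/\ s <= r1, s <= r2 & s <= 1].
  by split; rewrite !ge_min lexx ?orbT.
exists ((delta / 2) ^+ 2 * (2 * s) ^+ d * (2 * s) ^+ d).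
  by rewrite !mulr_gt0 // exprn_gt0 // mulr_gt0.
move=> x hx; have Rad0 : 0 <= Rad := le_trans (sqrtr_ge0 _) hx.
have in_ball c y : enorm c <= Rad -> cube (c - x) s y ->
    enorm y <= d%:R * (2 * Rad + 1).
  move=> hc /(enorm_le_cube (ltW s0) _ (B := 2 * Rad)) hy.
  apply: le_trans (hy _ _) _; first by rewrite mulr_ge0.
    move=> i; rewrite !mxE; apply: le_trans (ler_normB _ _) _.
    by have := enorm_coord_le c i; have := enorm_coord_le x i; lra.
  by rewrite ler_wpM2l //; lra.
apply: (Jint_ge_cubes (c1 := x1 - x) (c2 := x2 - x)) => // [|y y' hy hy'].
  exact: sqr_ge0.
split; [exact: in_ball hy | exact: in_ball hy' |].
rewrite ler_sqr ?nnegrE //; last by rewrite divr_ge0 // ltW.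
apply: (@ler_half_dist_near _ (b x1) (b x2)).
  by apply: near_x1; apply: cube_le sr1 _; exact: cube_addl.
by apply: near_x2; apply: cube_le sr2 _; exact: cube_addl.
Qed.

End JintLowerBound.

Theorem lemma4p3 (R : realType) (d : nat) (b : 'rV[R]_d -> R) (Rad : R) :
  (0 < d)%N ->
  continuous b ->
  (exists C : R, forall x, `|b x| <= C) ->
  0 < Rad ->
  (exists x1 x2 : 'rV[R]_d,
      [/\ enorm x1 <= Rad, enorm x2 <= Rad & b x1 != b x2]) ->
  (forall x : 'rV[R]_d, Rad < enorm x ->
     exists z : 'rV[R]_d, enorm z <= Rad /\ forall y, b (x + y) = b (z + y)) ->
  exists M : R, 0 < M /\
    (0 < ereal_inf [set Jint b M x | x in [set: 'rV[R]_d]])%E.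
Proof.
move=> d_gt0 hb _ Rad_gt0 [x1 [x2 [n1 n2 neq]]] hper.
have [L L_gt0 hL] := Jint_bounded_below_on_ball hb n1 n2 neq.
exists (d%:R * (2 * Rad + 1)); split.
  by rewrite mulr_gt0 ?ltr0n //; lra.
apply: (@lt_le_trans _ _ L%:E); first by rewrite lte_fin.
apply/ereal_infP => _ [x _ <-].
have [/hL //|/hper[z [hz /Jint_shift ->]]] := lerP (enorm x) Rad.
exact: hL.
Qed.
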